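(* Let $(S,+)$ be a commutative semigroup and let $A\subseteq S$ be a set of A.P. rich. Fix $l\in\mathbb{N}$ and put \[ B=\{(a,b)\in S\times S:\ \{a,\,a+b,\,a+2b,\dots,\,a+lb\}\subseteq A\}. \] Then $B$ is a set of A.P. rich in the semigroup $S\times S$ (with coordinatewise addition).
   Context: Semigroups are written additively; for $n\in\mathbb{N}$ and $b\in S$, $nb$ denotes $b+b+\dots+b$ ($n$ summands), and $a+0b$ means $a$. An arithmetic progression of length $k$ in a semigroup $T$ is a set $\{a,\,a+b,\,a+2b,\dots,\,a+kb\}$ with $a,b\in T$ (if $T$ has an identity element, $b$ is required not to be the identity). A subset $A$ of a semigroup $T$ is called a set of A.P. rich if it contains arithmetic progressions of arbitrary length, i.e. for every $k\in\mathbb{N}$ there exist $a,b\in T$ with $a+ib\in A$ for all $0\le i\le k$. $S\times S$ is a semigroup under coordinatewise addition. *)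

From Stdlib Require Import Arith.

Fixpoint ap {T : Type} (op : T -> T -> T) (a b : T) (i : nat) : T :=
  match i with
  | 0 => a
  | S i' => op (ap op a b i') b
  end.

Definition is_identity {T : Type} (op : T -> T -> T) (e : T) : Prop :=
  forall x, op e x = x /\ op x e = x.

Definition AP_rich {T : Type} (op : T -> T -> T) (A : T -> Prop) : Prop :=
  forall k : nat, exists a b : T,
    (forall e, is_identity op e -> b <> e) /\
    (forall i, i <= k -> A (ap op a b i)).

Definition prod_op {T : Type} (op : T -> T -> T) (x y : T * T) : T * T :=
  (op (fst x) (fst y), op (snd x) (snd y)).

(* With (a, b) the start and step of a progression of length k + l(k+1) in A,
   the pair (a, b) with step (b, b) works: its j-th term is (a + jb, (j+1)b), and
   the i-th term of the progression it generates is a + (j + i(j+1))b, which stays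
   inside the long progression for j <= k and i <= l. *)
From Stdlib Require Import Arith Lia.

Section Progressions.

Variables (T : Type) (op : T -> T -> T).

Lemma ap_add (a b : T) (m n : nat) : ap op a b (m + n) = ap op (ap op a b m) b n.
Proof.
  induction n as [|n IH]; simpl.
  - now rewrite Nat.add_0_r.
  - now rewrite Nat.add_succ_r; simpl; rewrite IH.
Qed.

Lemma ap_prod_op (x y : T * T) (j : nat) :
  ap (prod_op op) x y j = (ap op (fst x) (fst y) j, ap op (snd x) (snd y) j).
Proof.
  induction j as [|j IH]; simpl.
  - now destruct x.
  - now rewrite IH.
Qed.

Lemma is_identity_prod_op_diag (e : T) :
  is_identity (prod_op op) (e, e) -> is_identity op e.
Proof.
  intros He x. destruct (He (x, x)) as [Hl Hr].
  unfold prod_op in Hl, Hr; simpl in Hl, Hr.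
  injection Hl as Hl _. injection Hr as Hr _. now split.
Qed.

Hypothesis op_assoc : forall x y z, op x (op y z) = op (op x y) z.

Lemma op_ap_diag (a b : T) (j : nat) : op a (ap op b b j) = ap op a b (S j).
Proof.
  induction j as [|j IH]; simpl; [reflexivity|].
  now rewrite op_assoc, IH.
Qed.

Lemma ap_ap_diag (a b : T) (j i : nat) :
  ap op (ap op a b j) (ap op b b j) i = ap op a b (j + i * S j).
Proof.
  induction i as [|i IH]; simpl.
  - now rewrite Nat.add_0_r.
  - rewrite IH, op_ap_diag, <- ap_add.
    f_equal. lia.
Qed.

End Progressions.

Theorem theorem2 (S : Type) (op : S -> S -> S)
  (op_assoc : forall x y z, op x (op y z) = op (op x y) z)
  (op_comm : forall x y, op x y = op y x)
  (A : S -> Prop) (hA : AP_rich op A) (l : nat) :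
  AP_rich (prod_op op)
    (fun p : S * S => forall i, i <= l -> A (ap op (fst p) (snd p) i)).
Proof.
  intros k. destruct (hA (k + l * Nat.succ k)) as [a [b [Hb HA]]].
  exists (a, b), (b, b). split.
  - intros e He Heq. subst e. apply (Hb b); [|reflexivity].
    now apply is_identity_prod_op_diag.
  - intros j Hj i Hi. rewrite ap_prod_op; simpl.
    rewrite ap_ap_diag by exact op_assoc.
    apply HA. apply Nat.add_le_mono; [exact Hj|].
    apply Nat.mul_le_mono; [exact Hi|]. now apply le_n_S.
Qed.
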